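(* Let $n\ge1$, let $I\subset\mathbb R$ be an interval, $x_*\in I$, and $y\in C^{2n+1,1}(I)$ with $$y(x)=y_*+a_{2n+1}(x-x_* )^{2n+1}+a_{2n+2}(x)(x-x_* )^{2n+2}\qquad(x\in I),$$ where $y_*\in\mathbb R$, $a_{2n+1}>0$ is a constant and $a_{2n+2}:I\to\mathbb R$ is continuous. Let $$J:=\Bigl\{x\in I:\ |a_{2n+2}(x)|^{2n+1}|y(x)-y_*|<a_{2n+1}^{2n+2}R_n^{2n+1},\ \ \tfrac{(2n+2)a_{2n+2}(x)(x-x_* )}{(2n+1)a_{2n+1}}>-1\Bigr\},$$ and let $\tilde J$ be the connected component of $J$ containing $x_*$. Then for all $x\in\tilde J$, $$x-x_*=\Bigl(\tfrac{y(x)-y_*}{a_{2n+1}}\Bigr)^{\frac1{2n+1}}\sum_{j=0}^\infty\Bigl(\tfrac{-a_{2n+2}(x)}{(2n+1)a_{2n+1}}\Bigr)^jc_j^n\Bigl(\tfrac{y(x)-y_*}{a_{2n+1}}\Bigr)^{\frac j{2n+1}}.$$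
   Context: $s^{1/(2n+1)}$ is the real odd root. The sequence $(c_j^n)_{j\ge0}$ is defined recursively by $c_0^n:=1$ and $c_m^n:=\sum_{\ell_1+\dots+\ell_{2n+2}=m-1}c^n_{\ell_1}\cdots c^n_{\ell_{2n+2}}-\tfrac1{2n+1}\sum_{j_1+\dots+j_{2n+1}=m,\ 0\le j_i\le m-1}c^n_{j_1}\cdots c^n_{j_{2n+1}}$ (indices nonnegative integers). $R_n:=\frac{2n+1}{\limsup_{j\to\infty}|c_j^n|^{1/j}}$, which is positive (the power series $\bar y_n(z)=\sum_j\frac{(-1)^j}{(2n+1)^j}c_j^nz^j$ has radius of convergence $R_n>0$, and $y_0(x)=x^{1/(2n+1)}\bar y_n(x^{1/(2n+1)})$ solves $-x+y_0^{2n+1}+y_0^{2n+2}=0$). *)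

From Stdlib Require Import Reals Lra Lia.
From Coquelicot Require Import Coquelicot.
Open Scope R_scope.

Definition is_interval (I : R -> Prop) : Prop :=
  forall a b c, I a -> I b -> a <= c <= b -> I c.

Definition derive_within (I : R -> Prop) (f : R -> R) (x l : R) : Prop :=
  filterlim (fun h => (f h - f x) / (h - x))
    (within (fun h => I h /\ h <> x) (locally x)) (locally l).

Definition cont_on (I : R -> Prop) (f : R -> R) : Prop :=
  forall x, I x -> filterlim f (within I (locally x)) (locally (f x)).

Definition Ck1 (k : nat) (I : R -> Prop) (y : R -> R) : Prop :=
  exists d : nat -> R -> R,
    (forall x, I x -> d 0%nat x = y x) /\
    (forall j, (j < k)%nat -> forall x, I x -> derive_within I (d j) x (d (S j) x)) /\
    (exists L, forall x z, I x -> I z -> Rabs (d k x - d k z) <= L * Rabs (x - z)).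

Fixpoint sumR (N : nat) (g : nat -> R) : R :=
  match N with O => 0 | S N' => sumR N' g + g N' end.

(* comp_sum f k m b = sum over (j_1,...,j_k) in nat^k with j_1+...+j_k = m and
   0 <= j_i <= b of f j_1 * ... * f j_k  (computed by peeling off j_1). *)
Fixpoint comp_sum (f : nat -> R) (b : nat) (k m : nat) : R :=
  match k with
  | O => if Nat.eqb m 0 then 1 else 0
  | S k' => sumR (S (Nat.min m b)) (fun j => f j * comp_sum f b k' (m - j))
  end.

Fixpoint c_list (n m : nat) : list R :=
  match m with
  | O => 1 :: nil
  | S m' =>
      let prev := c_list n m' in
      let f := fun j => List.nth j prev 0 in
      prev ++ (comp_sum f m' (2 * n + 2) m'
               - / INR (2 * n + 1) * comp_sum f m' (2 * n + 1) (S m')) :: nil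
  end.

(* c^n_m : c_0 = 1, c_m = sum_{l_1+..+l_{2n+2}=m-1} prod c_{l_i}
   - 1/(2n+1) sum_{j_1+..+j_{2n+1}=m, 0<=j_i<=m-1} prod c_{j_i} *)
Definition cseq (n m : nat) : R := List.nth m (c_list n m) 0.

Definition nnroot (k : nat) (x : R) : R :=
  if Req_EM_T x 0 then 0 else Rpower x (/ INR k).

Definition oddroot (k : nat) (s : R) : R :=
  if Rlt_dec s 0 then - nnroot k (- s) else nnroot k s.

(* R_n = (2n+1) / limsup_j |c^n_j|^{1/j}, in [0, +oo] *)
Definition Rn (n : nat) : Rbar :=
  match LimSup_seq (fun j => nnroot j (Rabs (cseq n j))) with
  | Finite l => if Req_EM_T l 0 then p_infty else Finite (INR (2 * n + 1) / l)
  | p_infty => Finite 0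
  | m_infty => p_infty
  end.

Definition lt_bound (n : nat) (v a : R) : Prop :=
  match Rn n with
  | Finite r => v < a ^ (2 * n + 2) * r ^ (2 * n + 1)
  | p_infty => True
  | m_infty => False
  end.

Definition conn_comp (J : R -> Prop) (p : R) (x : R) : Prop :=
  exists K : R -> Prop, is_interval K /\ (forall z, K z -> J z) /\ K p /\ K x.

(* Let C(w) = sum_j c^n_j w^j.  The recurrence for c^n_j says precisely that
   C^{2n+1} = 1 + (2n+1) w C^{2n+2} as formal power series, so this identity holds inside
   the disc of convergence, which the first condition defining J guarantees by the root
   test.  With Phi(T) = T^{2n+1} + T^{2n+2}, the function G(sigma) = sigma C(-sigma/(2n+1))
   thus solves Phi(G(sigma)) = sigma^{2n+1}.  For t = x - xs, s the odd root of
   (y(x) - ys)/a1 and b = a2(x)/a1, the form of y gives Phi(bt) = (bs)^{2n+1}.  Phi is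
   strictly increasing right of its critical point T_c = -(2n+1)/(2n+2), where it attains
   its negative minimum, so by continuity G (which starts at G(0) = 0) never reaches T_c.
   The second condition defining J says bt > T_c, hence bt = G(bs), which is the expansion. *)

From Pilot Require Import Defs.
From Stdlib Require Import Reals Lra Lia List.
From Coquelicot Require Import Coquelicot.
Open Scope R_scope.

Lemma INR_odd_pos n : 0 < INR (2 * n + 1).
Proof. apply lt_0_INR. lia. Qed.

Lemma INR_even_pos n : 0 < INR (2 * n + 2).
Proof. apply lt_0_INR. lia. Qed.

Lemma INR_even_succ n : INR (2 * n + 2) = INR (2 * n + 1) + 1.
Proof. rewrite <- S_INR. f_equal. lia. Qed.

Fixpoint PS_pow (a : nat -> R) (k : nat) : nat -> R :=
  match k with
  | O => fun m => if Nat.eqb m 0 then 1 else 0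
  | S k' => PS_mult a (PS_pow a k')
  end.

Lemma sumR_sum_f_R0 N g : sumR (S N) g = sum_f_R0 g N.
Proof.
  induction N as [|N IH]; [simpl; ring|].
  change (sumR (S (S N)) g) with (sumR (S N) g + g (S N)). now rewrite IH.
Qed.

Lemma sum_f_R0_eq_from_1 (g h : nat -> R) N :
  (forall j, (1 <= j <= N)%nat -> g j = h j) ->
  sum_f_R0 g N - g O = sum_f_R0 h N - h O.
Proof.
  induction N as [|N IH]; intros Hgh; simpl; [ring|].
  rewrite (Hgh (S N)) by lia.
  assert (IH' := IH ltac:(intros; apply Hgh; lia)). lra.
Qed.

Lemma comp_sum_ext f g b : (forall j, (j <= b)%nat -> f j = g j) ->
  forall k m, comp_sum f b k m = comp_sum g b k m.
Proof.
  intros Hfg k. induction k as [|k IH]; intros m; cbn [comp_sum]; [reflexivity|].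
  rewrite !sumR_sum_f_R0. apply sum_eq. intros j Hj. now rewrite Hfg, IH by lia.
Qed.

(* Below the bound [b] no part is truncated. *)
Lemma comp_sum_PS_pow f b k m : (m <= b)%nat -> comp_sum f b k m = PS_pow f k m.
Proof.
  revert m. induction k as [|k IH]; intros m Hm; cbn [comp_sum PS_pow]; [reflexivity|].
  rewrite Nat.min_l, sumR_sum_f_R0 by lia. apply sum_eq. intros j Hj.
  now rewrite IH by lia.
Qed.

Lemma PS_pow_0 a k : PS_pow a k 0 = a O ^ k.
Proof.
  induction k as [|k IH]; [reflexivity|].
  cbn [PS_pow]. unfold PS_mult. simpl. rewrite IH. ring.
Qed.

(* Just above the bound, the truncation removes the [k] compositions having one part
   equal to [b + 1] and all others [0]. *)
Lemma comp_sum_succ_bound f b k : f O = 1 ->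
  comp_sum f b k (S b) = PS_pow f k (S b) - INR k * f (S b).
Proof.
  intros Hf0. induction k as [|k IH]; [simpl; ring|].
  cbn [comp_sum]. rewrite Nat.min_r, sumR_sum_f_R0 by lia.
  assert (Hsplit := sum_f_R0_eq_from_1 (fun j => f j * comp_sum f b k (S b - j))
                      (fun j => f j * PS_pow f k (S b - j)) b
                      ltac:(intros j Hj; cbn beta; rewrite comp_sum_PS_pow by lia; reflexivity)).
  cbn beta in Hsplit. rewrite Nat.sub_0_r, IH, Hf0 in Hsplit.
  cbn [PS_pow]. unfold PS_mult.
  rewrite tech5, Nat.sub_diag, PS_pow_0, Hf0, pow1, S_INR. lra.
Qed.

Lemma c_list_length n m : length (c_list n m) = S m.
Proof.
  induction m as [|m IH]; [reflexivity|].
  cbn [c_list]. rewrite length_app, IH. simpl. lia.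
Qed.

Lemma nth_c_list n m j : (j <= m)%nat -> nth j (c_list n m) 0 = cseq n j.
Proof.
  induction m as [|m IH]; intros Hj.
  - now replace j with O by lia.
  - destruct (Nat.eq_dec j (S m)) as [->|Hne]; [reflexivity|].
    cbn [c_list]. rewrite app_nth1 by (rewrite c_list_length; lia). apply IH. lia.
Qed.

Lemma cseq_0 n : cseq n 0 = 1.
Proof. reflexivity. Qed.

Lemma cseq_S n m : cseq n (S m) =
  comp_sum (cseq n) m (2 * n + 2) m
  - / INR (2 * n + 1) * comp_sum (cseq n) m (2 * n + 1) (S m).
Proof.
  unfold cseq at 1. cbn [c_list].
  rewrite app_nth2 by (rewrite c_list_length; lia).
  rewrite c_list_length, Nat.sub_diag. cbn [nth].
  now rewrite !(comp_sum_ext (fun j => nth j (c_list n m) 0) (cseq n) m)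
    by (intros; apply nth_c_list; assumption).
Qed.

Lemma PS_pow_cseq_S n m :
  PS_pow (cseq n) (2 * n + 1) (S m) = INR (2 * n + 1) * PS_pow (cseq n) (2 * n + 2) m.
Proof.
  pose proof (cseq_S n m) as Hc.
  rewrite comp_sum_PS_pow, comp_sum_succ_bound in Hc by (reflexivity || lia).
  pose proof (INR_odd_pos n) as HK.
  apply (Rmult_eq_compat_l (INR (2 * n + 1))) in Hc.
  field_simplify in Hc; [|lra]. lra.
Qed.

Lemma pow_odd_opp x n : (- x) ^ (2 * n + 1) = - x ^ (2 * n + 1).
Proof.
  replace (- x) with ((-1) * x) by ring.
  rewrite Rpow_mult_distr, Nat.add_1_r, pow_1_odd. ring.
Qed.

Lemma pow_lt_compat_nonneg x y k : 0 <= x < y -> (0 < k)%nat -> x ^ k < y ^ k.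
Proof.
  intros Hxy Hk. induction k as [|k IH]; [lia|].
  destruct k as [|k]; [simpl; lra|].
  rewrite <- !(tech_pow_Rmult _ (S k)).
  pose proof (IH ltac:(lia)). pose proof (pow_le x (S k) ltac:(lra)). nra.
Qed.

Lemma pow_odd_lt x y n : x < y -> x ^ (2 * n + 1) < y ^ (2 * n + 1).
Proof.
  intros Hxy.
  assert (Hpos : forall u v, 0 <= u < v -> u ^ (2 * n + 1) < v ^ (2 * n + 1))
    by (intros u v Huv; apply pow_lt_compat_nonneg; [lra|lia]).
  destruct (Rle_dec 0 x) as [Hx|Hx]; [now apply Hpos|].
  destruct (Rle_dec y 0) as [Hy|Hy].
  - specialize (Hpos (- y) (- x) ltac:(lra)). rewrite !pow_odd_opp in Hpos. lra.
  - pose proof (pow_lt (- x) (2 * n + 1) ltac:(lra)) as Hxk.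
    pose proof (pow_lt y (2 * n + 1) ltac:(lra)) as Hyk.
    rewrite pow_odd_opp in Hxk. lra.
Qed.

Lemma pow_odd_inj x y n : x ^ (2 * n + 1) = y ^ (2 * n + 1) -> x = y.
Proof.
  intros Heq. destruct (Rtotal_order x y) as [Hlt|[Heq'|Hgt]]; [|exact Heq'|].
  - pose proof (pow_odd_lt _ _ n Hlt). lra.
  - pose proof (pow_odd_lt _ _ n Hgt). lra.
Qed.

Lemma nnroot_pow k v : (0 < k)%nat -> 0 <= v -> nnroot k v ^ k = v /\ 0 <= nnroot k v.
Proof.
  intros Hk Hv. unfold nnroot. destruct (Req_EM_T v 0) as [->|Hv0].
  - split; [apply pow_i; lia | lra].
  - assert (Hexp : 0 < Rpower v (/ INR k)) by apply exp_pos.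
    split; [|lra].
    rewrite <- Rpower_pow, Rpower_mult, Rinv_l by (lra || apply not_0_INR; lia).
    apply Rpower_1. lra.
Qed.

Lemma oddroot_pow n v : oddroot (2 * n + 1) v ^ (2 * n + 1) = v.
Proof.
  unfold oddroot. destruct (Rlt_dec v 0).
  - rewrite pow_odd_opp, (proj1 (nnroot_pow (2 * n + 1) (- v) ltac:(lia) ltac:(lra))). ring.
  - apply nnroot_pow; [lia|lra].
Qed.

Lemma CV_radius_ge_bounded a r :
  (exists M, forall j, Rabs (a j * r ^ j) <= M) -> Rbar_le r (CV_radius a).
Proof. intros Hbd. now apply (CV_radius_bounded a). Qed.

Lemma CV_radius_ge_ex_pseries a r : ex_pseries a r -> Rbar_le (Rabs r) (CV_radius a).
Proof.
  intros Hex. apply Rbar_not_lt_le. intros Hout.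
  apply (CV_disk_outside a r Hout). apply ex_series_lim_0.
  now apply ex_pseries_R.
Qed.

Lemma Rabs_le_sum_f_R0 (u : nat -> R) j N : (j <= N)%nat ->
  Rabs (u j) <= sum_f_R0 (fun k => Rabs (u k)) N.
Proof.
  induction N as [|N IH]; intros HjN.
  - replace j with O by lia. simpl. lra.
  - rewrite tech5. pose proof (Rabs_pos (u (S N))).
    assert (0 <= sum_f_R0 (fun k => Rabs (u k)) N)
      by (apply cond_pos_sum; intros; apply Rabs_pos).
    destruct (Nat.eq_dec j (S N)) as [->|Hne]; [lra|].
    specialize (IH ltac:(lia)). lra.
Qed.

Lemma bounded_of_eventually_bounded (u : nat -> R) N B :
  (forall j, (N <= j)%nat -> Rabs (u j) <= B) -> exists M, forall j, Rabs (u j) <= M.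
Proof.
  intros HB. exists (B + sum_f_R0 (fun k => Rabs (u k)) N). intros j.
  assert (0 <= sum_f_R0 (fun k => Rabs (u k)) N)
    by (apply cond_pos_sum; intros; apply Rabs_pos).
  assert (0 <= B) by (specialize (HB N (le_n N)); pose proof (Rabs_pos (u N)); lra).
  destruct (Nat.le_gt_cases N j) as [HNj|HjN].
  - specialize (HB j HNj). lra.
  - pose proof (Rabs_le_sum_f_R0 u j N ltac:(lia)). lra.
Qed.

Lemma Rbar_lt_between2 (x : R) (A B : Rbar) : Rbar_lt x A -> Rbar_lt x B ->
  exists r, x < r /\ Rbar_lt r A /\ Rbar_lt r B.
Proof.
  destruct A as [a| |], B as [b| |]; simpl; try tauto; intros HA HB.
  - exists ((x + Rmin a b) / 2). unfold Rmin. destruct (Rle_dec a b); lra.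
  - exists ((x + a) / 2). lra.
  - exists ((x + b) / 2). lra.
  - exists (x + 1). lra.
Qed.

Lemma CV_radius_PS_mult_gt a b x : Rbar_lt (Rabs x) (CV_radius a) ->
  Rbar_lt (Rabs x) (CV_radius b) -> Rbar_lt (Rabs x) (CV_radius (PS_mult a b)).
Proof.
  intros Ha Hb. destruct (Rbar_lt_between2 _ _ _ Ha Hb) as [r [Hxr [Hra Hrb]]].
  assert (Hr : Rabs r = r) by (apply Rabs_pos_eq; pose proof (Rabs_pos x); lra).
  rewrite <- Hr in Hra, Hrb.
  apply Rbar_lt_le_trans with (Rabs r); [simpl; lra|].
  now apply CV_radius_ge_ex_pseries, ex_pseries_mult.
Qed.

Lemma CV_radius_PS_pow_gt a x k : Rbar_lt (Rabs x) (CV_radius a) ->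
  Rbar_lt (Rabs x) (CV_radius (PS_pow a k)).
Proof.
  intros Ha. induction k as [|k IH]; [|now apply CV_radius_PS_mult_gt].
  apply Rbar_lt_le_trans with (Rabs x + 1); [simpl; lra|].
  apply CV_radius_ge_bounded. exists 1. intros [|j]; simpl.
  - rewrite Rmult_1_l, Rabs_R1. lra.
  - rewrite Rmult_0_l, Rabs_R0. lra.
Qed.

Lemma is_pseries_PS_pow a x k : Rbar_lt (Rabs x) (CV_radius a) ->
  is_pseries (PS_pow a k) x (PSeries a x ^ k).
Proof.
  intros Ha. induction k as [|k IH].
  - apply is_pseries_R. replace (PSeries a x ^ 0) with (/ (1 - 0)) by (simpl; field).
    apply (is_series_ext (fun j => 0 ^ j)); [intros [|j]; simpl; ring|].
    apply is_series_geom. rewrite Rabs_R0. lra.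
  - apply is_pseries_mult; [|exact IH|exact Ha|now apply CV_radius_PS_pow_gt].
    now apply PSeries_correct, CV_radius_inside.
Qed.

Lemma PSeries_cseq_pow n w : Rbar_lt (Rabs w) (CV_radius (cseq n)) ->
  PSeries (cseq n) w ^ (2 * n + 1)
  = 1 + INR (2 * n + 1) * w * PSeries (cseq n) w ^ (2 * n + 2).
Proof.
  intros Hw. set (C := PSeries (cseq n) w).
  assert (Hodd := is_pseries_PS_pow _ _ (2 * n + 1) Hw).
  assert (Heven := is_pseries_PS_pow _ _ (2 * n + 2) Hw).
  apply is_pseries_R in Hodd, Heven. fold C in Hodd, Heven.
  assert (Htail : is_series (fun m => PS_pow (cseq n) (2 * n + 1) (S m) * w ^ S m)
                    (C ^ (2 * n + 1) - 1)).
  { apply (is_series_incr_1 (fun m => PS_pow (cseq n) (2 * n + 1) m * w ^ m)).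
    rewrite PS_pow_0, cseq_0, pow1, pow_O.
    match goal with |- is_series _ ?l =>
      replace l with (C ^ (2 * n + 1)) by (unfold plus; simpl; ring) end.
    exact Hodd. }
  apply (is_series_scal_r (INR (2 * n + 1) * w)) in Heven.
  assert (Htail' : is_series (fun m => PS_pow (cseq n) (2 * n + 1) (S m) * w ^ S m)
                     (C ^ (2 * n + 2) * (INR (2 * n + 1) * w))).
  { assert (Hcoef : forall m, PS_pow (cseq n) (2 * n + 2) m * w ^ m * (INR (2 * n + 1) * w)
                             = PS_pow (cseq n) (2 * n + 1) (S m) * w ^ S m).
    { intros m. rewrite PS_pow_cseq_S, <- tech_pow_Rmult. ring. }
    exact (is_series_ext _ _ _ Hcoef Heven). }
  apply is_series_unique in Htail, Htail'. lra.
Qed.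

Lemma CV_radius_gt_root_test a w L : 0 <= L -> Rabs w * L < 1 ->
  (forall eps, 0 < eps -> exists N, forall j, (N <= j)%nat ->
     nnroot j (Rabs (a j)) < L + eps) ->
  Rbar_lt (Rabs w) (CV_radius a).
Proof.
  intros HL HwL Hroot. pose proof (Rabs_pos w) as Hu. set (u := Rabs w) in *.
  (* [rho] lies strictly between [|w|] and [1/L] *)
  set (rho := (2 * u + 1) / (1 + u * L + L)).
  assert (Hrho : u < rho /\ rho * L < 1).
  { assert (Hden : 0 < 1 + u * L + L) by nra.
    assert (Hdef : rho * (1 + u * L + L) = 2 * u + 1) by (unfold rho; field; lra).
    assert (Hgap1 : (rho - u) * (1 + u * L + L) = (u + 1) * (1 - u * L)).
    { replace ((rho - u) * _) with (rho * (1 + u * L + L) - u * (1 + u * L + L)) by ring.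
      rewrite Hdef. ring. }
    assert (Hgap2 : (1 - rho * L) * (1 + u * L + L) = 1 - u * L).
    { replace ((1 - rho * L) * _) with (1 + u * L + L - L * (rho * (1 + u * L + L))) by ring.
      rewrite Hdef. ring. }
    split; [assert (0 < rho - u) | assert (0 < 1 - rho * L)]; try lra;
      apply (Rmult_lt_reg_r (1 + u * L + L)); nra. }
  assert (Hrho0 : 0 < rho) by lra.
  destruct (Hroot ((1 - rho * L) / rho)) as [N HN].
  { apply Rdiv_lt_0_compat; lra. }
  apply Rbar_lt_le_trans with rho; [simpl; lra|].
  apply CV_radius_ge_bounded, (bounded_of_eventually_bounded _ (max N 1) 1).
  intros j Hj. specialize (HN j ltac:(lia)).
  destruct (nnroot_pow j (Rabs (a j)) ltac:(lia) (Rabs_pos _)) as [Hpow Hnn].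
  rewrite Rabs_mult, <- Hpow, (Rabs_pos_eq (rho ^ j)), <- Rpow_mult_distr, <- (pow1 j)
    by (apply pow_le; lra).
  apply pow_incr. split; [nra|].
  assert (Hone : rho * (L + (1 - rho * L) / rho) = 1) by (field; lra).
  nra.
Qed.

Lemma CV_radius_cseq_gt n w : Rbar_lt (INR (2 * n + 1) * Rabs w) (Defs.Rn n) ->
  Rbar_lt (Rabs w) (CV_radius (cseq n)).
Proof.
  unfold Defs.Rn. destruct (ex_LimSup_seq (fun j => nnroot j (Rabs (cseq n j)))) as [l Hl].
  rewrite (is_LimSup_seq_unique _ _ Hl).
  pose proof (Rabs_pos w). pose proof (INR_odd_pos n).
  destruct l as [l| |]; intros Hw.
  - destruct (Req_EM_T l 0) as [->|Hl0].
    + apply (CV_radius_gt_root_test _ _ 0); [lra|lra|].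
      intros eps Heps. exact (proj2 (Hl (mkposreal eps Heps))).
    + cbn [Rbar_lt] in Hw. assert (Hlpos : 0 < l).
      { destruct (Rtotal_order l 0) as [Hneg|[?|?]]; [|lra|lra].
        assert (/ l < 0) by (apply Rinv_lt_0_compat; lra). unfold Rdiv in Hw. nra. }
      apply (CV_radius_gt_root_test _ _ l); [lra| |].
      * apply (Rmult_lt_reg_l (INR (2 * n + 1))); [lra|].
        apply (Rmult_lt_compat_r l) in Hw; [|lra].
        replace (INR (2 * n + 1) / l * l) with (INR (2 * n + 1)) in Hw by (field; lra). lra.
      * intros eps Heps. exact (proj2 (Hl (mkposreal eps Heps))).
  - cbn [Rbar_lt] in Hw. nra.
  - apply (CV_radius_gt_root_test _ _ 0); [lra|lra|].
    intros eps Heps. destruct (Hl (0 + eps)) as [N HN]. exists N. exact HN.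
Qed.

Definition Phi (n : nat) (T : R) : R := T ^ (2 * n + 1) + T ^ (2 * n + 2).
Definition Tcrit (n : nat) : R := - INR (2 * n + 1) / INR (2 * n + 2).

Lemma Phi_factor n T : Phi n T = T ^ (2 * n + 1) * (1 + T).
Proof.
  unfold Phi. replace (2 * n + 2)%nat with (S (2 * n + 1)) by lia.
  rewrite <- tech_pow_Rmult. ring.
Qed.

Lemma Tcrit_bounds n : -1 < Tcrit n < 0.
Proof.
  unfold Tcrit. pose proof (INR_odd_pos n). rewrite INR_even_succ.
  split; [apply Rlt_div_r|apply Rlt_div_l]; lra.
Qed.

Lemma Phi_Tcrit_neg n : Phi n (Tcrit n) < 0.
Proof.
  rewrite Phi_factor. destruct (Tcrit_bounds n) as [Hlow Hneg].
  pose proof (pow_odd_lt _ _ n Hneg) as Hpow. rewrite pow_i in Hpow by lia. nra.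
Qed.

Lemma Phi_mean_value n T1 T2 : T1 < T2 -> exists c, T1 < c < T2 /\
  Phi n T2 - Phi n T1 = c ^ (2 * n) * INR (2 * n + 2) * (c - Tcrit n) * (T2 - T1).
Proof.
  intros H12.
  assert (Hder : forall c, derivable_pt_lim (Phi n) c
                   (c ^ (2 * n) * INR (2 * n + 2) * (c - Tcrit n))).
  { intros c. replace (c ^ (2 * n) * INR (2 * n + 2) * (c - Tcrit n)) with
      (INR (2 * n + 1) * c ^ pred (2 * n + 1) + INR (2 * n + 2) * c ^ pred (2 * n + 2)).
    - apply (derivable_pt_lim_plus (fun T => T ^ (2 * n + 1)) (fun T => T ^ (2 * n + 2)));
        apply derivable_pt_lim_pow.
    - replace (pred (2 * n + 1)) with (2 * n)%nat by lia.
      replace (pred (2 * n + 2)) with (S (2 * n)) by lia.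
      unfold Tcrit. rewrite <- tech_pow_Rmult. field. rewrite INR_even_succ.
      pose proof (INR_odd_pos n). lra. }
  destruct (MVT_cor2 (Phi n) _ T1 T2 H12 (fun c _ => Hder c)) as [c [Hmvt Hc]].
  exists c. split; [lra|]. rewrite Hmvt. ring.
Qed.

Lemma pow_even_nonneg n T : 0 <= T ^ (2 * n).
Proof. rewrite pow_mult. apply pow_le, pow2_ge_0. Qed.

Lemma Phi_Tcrit_le n T : Phi n (Tcrit n) <= Phi n T.
Proof.
  pose proof (INR_even_pos n).
  destruct (Rtotal_order T (Tcrit n)) as [Hlt|[->|Hgt]]; [|lra|].
  - destruct (Phi_mean_value n _ _ Hlt) as [c [Hc Hmv]].
    pose proof (pow_even_nonneg n c).
    assert (c ^ (2 * n) * INR (2 * n + 2) * (c - Tcrit n) <= 0).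
    { apply Rmult_le_0_l; [apply Rmult_le_pos|]; lra. }
    nra.
  - destruct (Phi_mean_value n _ _ Hgt) as [c [Hc Hmv]].
    pose proof (pow_even_nonneg n c).
    assert (0 <= c ^ (2 * n) * INR (2 * n + 2) * (c - Tcrit n)).
    { apply Rmult_le_pos; [apply Rmult_le_pos|]; lra. }
    nra.
Qed.

Lemma Phi_lt_right_Tcrit n T1 T2 : Tcrit n < T1 -> T1 < T2 -> Phi n T1 < Phi n T2.
Proof.
  pose proof (INR_even_pos n).
  (* the derivative vanishes only at [Tcrit] and [0], so split the interval at [0] *)
  assert (Hside : forall u v, Tcrit n < u -> u < v -> 0 <= u \/ v <= 0 -> Phi n u < Phi n v).
  { intros u v Hu Huv Hsign. destruct (Phi_mean_value n _ _ Huv) as [c [Hc Hmv]].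
    assert (Hc0 : 0 < c ^ (2 * n)) by (rewrite pow_mult; apply pow_lt, pow2_gt_0; lra).
    assert (0 < c ^ (2 * n) * INR (2 * n + 2) * (c - Tcrit n) * (v - u)).
    { repeat apply Rmult_lt_0_compat; lra. }
    lra. }
  intros H1 H12.
  destruct (Rle_dec 0 T1); [now apply Hside; auto|].
  destruct (Rle_dec T2 0); [now apply Hside; auto|].
  pose proof (Hside T1 0 H1 ltac:(lra) ltac:(lra)).
  pose proof (Hside 0 T2 ltac:(lra) ltac:(lra) ltac:(lra)). lra.
Qed.

Definition in_disc (n : nat) (sigma : R) : Prop :=
  Rbar_lt (Rabs (- sigma / INR (2 * n + 1))) (CV_radius (cseq n)).

Definition Gbranch (n : nat) (sigma : R) : R :=
  sigma * PSeries (cseq n) (- sigma / INR (2 * n + 1)).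

Lemma Rabs_opp_div_odd n s : Rabs (- s / INR (2 * n + 1)) = Rabs s / INR (2 * n + 1).
Proof.
  unfold Rdiv. rewrite Rabs_mult, Rabs_Ropp, Rabs_inv, (Rabs_pos_eq (INR _)) by apply pos_INR.
  reflexivity.
Qed.

Lemma in_disc_of_Rn n s : Rbar_lt (Rabs s) (Defs.Rn n) -> in_disc n s.
Proof.
  intros Hs. apply CV_radius_cseq_gt. rewrite Rabs_opp_div_odd.
  pose proof (INR_odd_pos n).
  now replace (INR (2 * n + 1) * (Rabs s / INR (2 * n + 1))) with (Rabs s) by (field; lra).
Qed.

Lemma in_disc_le n s s' : in_disc n s -> Rabs s' <= Rabs s -> in_disc n s'.
Proof.
  unfold in_disc. rewrite !Rabs_opp_div_odd. intros Hs Hle.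
  apply Rbar_le_lt_trans with (Rabs s / INR (2 * n + 1)); [|exact Hs].
  cbn [Rbar_le]. apply Rmult_le_compat_r; [|exact Hle].
  left. apply Rinv_0_lt_compat, INR_odd_pos.
Qed.

Lemma in_disc_extend_left n s : s < 0 -> in_disc n s -> exists s', s' < s /\ in_disc n s'.
Proof.
  intros Hneg Hs. unfold in_disc in Hs. pose proof (INR_odd_pos n).
  destruct (Rbar_lt_between2 _ _ _ Hs Hs) as [r [Hr [Hrad _]]].
  rewrite Rabs_opp_div_odd, Rabs_left in Hr by lra.
  assert (Hr0 : 0 <= - s / INR (2 * n + 1)) by (apply Rdiv_le_0_compat; lra).
  exists (- INR (2 * n + 1) * r). split.
  - apply (Rmult_lt_compat_l (INR (2 * n + 1))) in Hr; [|lra].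
    replace (INR (2 * n + 1) * (- s / INR (2 * n + 1))) with (- s) in Hr by (field; lra). lra.
  - unfold in_disc.
    replace (- (- INR (2 * n + 1) * r) / INR (2 * n + 1)) with r by (field; lra).
    now rewrite Rabs_pos_eq by lra.
Qed.

Lemma continuity_pt_Gbranch n s : in_disc n s -> continuity_pt (Gbranch n) s.
Proof.
  intros Hs. apply continuity_pt_mult; [apply continuity_pt_id|].
  apply (continuity_pt_comp (fun s => - s / INR (2 * n + 1)) (PSeries (cseq n)));
    [reg | now apply PSeries_continuity].
Qed.

Lemma Phi_Gbranch n s : in_disc n s -> Phi n (Gbranch n s) = s ^ (2 * n + 1).
Proof.
  intros Hs. unfold Gbranch. pose proof (PSeries_cseq_pow n _ Hs) as Hfun.
  set (C := PSeries (cseq n) (- s / INR (2 * n + 1))) in *.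
  replace (2 * n + 2)%nat with (S (2 * n + 1)) in Hfun by lia.
  rewrite <- tech_pow_Rmult in Hfun.
  replace (INR (2 * n + 1) * (- s / INR (2 * n + 1))) with (- s) in Hfun
    by (field; pose proof (INR_odd_pos n); lra).
  rewrite Phi_factor, Rpow_mult_distr.
  replace (s ^ (2 * n + 1) * C ^ (2 * n + 1) * (1 + s * C))
    with (s ^ (2 * n + 1) * (C ^ (2 * n + 1) + s * (C * C ^ (2 * n + 1)))) by ring.
  replace (C ^ (2 * n + 1) + s * (C * C ^ (2 * n + 1))) with 1 by lra. ring.
Qed.

(* If [Gbranch] reached [Tcrit] at some [s0], then [s0 ^ (2n+1) = Phi Tcrit < 0], and a
   slightly smaller [s1] would give [Phi (Gbranch s1) = s1 ^ (2n+1) < Phi Tcrit], below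
   the minimum of [Phi]. *)
Lemma Gbranch_gt_Tcrit n s : in_disc n s -> Tcrit n < Gbranch n s.
Proof.
  intros Hs. destruct (Rlt_le_dec (Tcrit n) (Gbranch n s)) as [Hgt|Hle]; [exact Hgt|exfalso].
  destruct (Tcrit_bounds n) as [_ Hneg].
  assert (Hhit : exists s0, in_disc n s0 /\ Gbranch n s0 = Tcrit n).
  { destruct (Rle_lt_or_eq_dec _ _ Hle) as [Hlt|Heq]; [|now exists s].
    assert (Hdisc : forall u, 0 <= u <= 1 -> in_disc n (u * s)).
    { intros u Hu. apply (in_disc_le n s); [exact Hs|].
      rewrite Rabs_mult, (Rabs_pos_eq u) by lra. pose proof (Rabs_pos s). nra. }
    destruct (Ranalysis5.IVT_interv (fun u => Tcrit n - Gbranch n (u * s)) 0 1)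
      as [u [Hu Hroot]].
    - intros u Hu. apply continuity_pt_minus; [apply continuity_pt_const; now intros ??|].
      apply (continuity_pt_comp (fun u => u * s) (Gbranch n));
        [reg | apply continuity_pt_Gbranch, Hdisc, Hu].
    - lra.
    - cbn beta. unfold Gbranch. rewrite !Rmult_0_l. lra.
    - cbn beta. rewrite Rmult_1_l. lra.
    - exists (u * s). split; [now apply Hdisc|]. cbn beta in Hroot. lra. }
  destruct Hhit as [s0 [Hs0 HG0]].
  assert (HPhi0 := Phi_Gbranch n s0 Hs0). rewrite HG0 in HPhi0.
  pose proof (Phi_Tcrit_neg n).
  assert (Hs0neg : s0 < 0).
  { destruct (Rlt_le_dec s0 0) as [?|Hnn]; [assumption|].
    pose proof (pow_le s0 (2 * n + 1) Hnn). lra. }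
  destruct (in_disc_extend_left n s0 Hs0neg Hs0) as [s1 [Hs1 Hdisc1]].
  pose proof (pow_odd_lt _ _ n Hs1). pose proof (Phi_Gbranch n s1 Hdisc1).
  pose proof (Phi_Tcrit_le n (Gbranch n s1)). lra.
Qed.

Lemma Gbranch_unique n s T :
  in_disc n s -> Tcrit n < T -> Phi n T = s ^ (2 * n + 1) -> T = Gbranch n s.
Proof.
  intros Hs HT HPhi. pose proof (Gbranch_gt_Tcrit n s Hs) as HG.
  pose proof (Phi_Gbranch n s Hs).
  destruct (Rtotal_order T (Gbranch n s)) as [Hlt|[Heq|Hgt]]; [|exact Heq|].
  - pose proof (Phi_lt_right_Tcrit n _ _ HT Hlt). lra.
  - pose proof (Phi_lt_right_Tcrit n _ _ HG Hgt). lra.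
Qed.

Lemma odd_power_inversion n b t s :
  s ^ (2 * n + 1) = t ^ (2 * n + 1) + b * t ^ (2 * n + 2) ->
  Tcrit n < b * t -> in_disc n (b * s) ->
  t = s * PSeries (cseq n) (- (b * s) / INR (2 * n + 1)).
Proof.
  intros Heq Hbranch Hdisc. destruct (Req_EM_T b 0) as [->|Hb].
  - rewrite Rmult_0_l, Rplus_0_r in Heq.
    replace (- (0 * s) / INR (2 * n + 1)) with 0 by (field; apply not_0_INR; lia).
    rewrite PSeries_0, cseq_0, Rmult_1_r. symmetry. exact (pow_odd_inj _ _ n Heq).
  - assert (HPhi : Phi n (b * t) = (b * s) ^ (2 * n + 1)).
    { rewrite Phi_factor, !Rpow_mult_distr, Heq.
      replace (2 * n + 2)%nat with (S (2 * n + 1)) by lia.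
      rewrite <- tech_pow_Rmult. ring. }
    apply (Rmult_eq_reg_l b); [|exact Hb].
    rewrite (Gbranch_unique n _ _ Hdisc Hbranch HPhi). unfold Gbranch. ring.
Qed.

Lemma lt_bound_Rn n a b s : 0 < a ->
  lt_bound n (Rabs b ^ (2 * n + 1) * Rabs (a * s ^ (2 * n + 1))) a ->
  Rbar_lt (Rabs (b / a * s)) (Defs.Rn n).
Proof.
  unfold lt_bound. intros Ha. destruct (Defs.Rn n) as [r| |]; cbn [Rbar_lt]; [|tauto|tauto].
  intros Hlt. set (z := Rabs (b / a * s)).
  assert (Hz : Rabs b ^ (2 * n + 1) * Rabs (a * s ^ (2 * n + 1))
               = a ^ (2 * n + 2) * z ^ (2 * n + 1)).
  { unfold z, Rdiv. rewrite !Rabs_mult, Rabs_inv, <- !RPow_abs, (Rabs_pos_eq a) by lra.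
    rewrite !Rpow_mult_distr, pow_inv.
    replace (2 * n + 2)%nat with (S (2 * n + 1)) by lia.
    rewrite <- tech_pow_Rmult. field. apply pow_nonzero. lra. }
  rewrite Hz in Hlt. destruct (Rlt_le_dec z r) as [Hzr|Hrz]; [exact Hzr|exfalso].
  assert (Hpow : r ^ (2 * n + 1) <= z ^ (2 * n + 1)).
  { destruct Hrz as [Hrz|Hrz]; [left; now apply pow_odd_lt|rewrite Hrz; lra]. }
  assert (0 < a ^ (2 * n + 2)) by (apply pow_lt; lra). nra.
Qed.

Lemma Tcrit_lt n T : INR (2 * n + 2) * T / INR (2 * n + 1) > -1 -> Tcrit n < T.
Proof.
  intros H. unfold Tcrit. pose proof (INR_odd_pos n). pose proof (INR_even_pos n).
  apply Rlt_div_l; [lra|].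
  apply (Rmult_gt_compat_r (INR (2 * n + 1))) in H; [|lra].
  replace (INR (2 * n + 2) * T / INR (2 * n + 1) * INR (2 * n + 1))
    with (INR (2 * n + 2) * T) in H by (field; lra).
  lra.
Qed.

Theorem lemmaA2 (n : nat) (I : R -> Prop) (xs ys a1 : R) (y a2 : R -> R) :
  (1 <= n)%nat ->
  is_interval I ->
  I xs ->
  Ck1 (2 * n + 1) I y ->
  0 < a1 ->
  cont_on I a2 ->
  (forall x, I x ->
     y x = ys + a1 * (x - xs) ^ (2 * n + 1) + a2 x * (x - xs) ^ (2 * n + 2)) ->
  let J := fun x => I x /\
     lt_bound n (Rabs (a2 x) ^ (2 * n + 1) * Rabs (y x - ys)) a1 /\
     INR (2 * n + 2) * a2 x * (x - xs) / (INR (2 * n + 1) * a1) > -1 in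
  forall x, conn_comp J xs x ->
    exists S : R,
      is_series (fun j => ((- a2 x) / (INR (2 * n + 1) * a1)) ^ j * cseq n j
                          * (oddroot (2 * n + 1) ((y x - ys) / a1)) ^ j) S /\
      x - xs = oddroot (2 * n + 1) ((y x - ys) / a1) * S.
Proof.
  intros _ _ _ _ Ha1 _ Hy J x [K [_ [HKJ [_ HKx]]]].
  destruct (HKJ x HKx) as [HIx [Hbound Hbranch]].
  set (s := oddroot (2 * n + 1) ((y x - ys) / a1)).
  set (b := a2 x / a1).
  pose proof (INR_odd_pos n).
  assert (Hs : s ^ (2 * n + 1) = (y x - ys) / a1) by apply oddroot_pow.
  assert (Hdisc : in_disc n (b * s)).
  { apply in_disc_of_Rn, (lt_bound_Rn n a1); [exact Ha1|].
    replace (a1 * s ^ (2 * n + 1)) with (y x - ys) by (rewrite Hs; field; lra).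
    exact Hbound. }
  exists (PSeries (cseq n) (- (b * s) / INR (2 * n + 1))). split.
  - assert (Hterm : forall j, cseq n j * (- (b * s) / INR (2 * n + 1)) ^ j
                      = (- a2 x / (INR (2 * n + 1) * a1)) ^ j * cseq n j * s ^ j).
    { intros j. replace (- (b * s) / INR (2 * n + 1))
        with (- a2 x / (INR (2 * n + 1) * a1) * s) by (unfold b; field; lra).
      rewrite Rpow_mult_distr. ring. }
    exact (is_series_ext _ _ _ Hterm
             (proj1 (is_pseries_R _ _ _) (PSeries_correct _ _ (CV_radius_inside _ _ Hdisc)))).
  - apply odd_power_inversion; [| |exact Hdisc].
    + rewrite Hs, (Hy x HIx). unfold b. field. lra.
    + apply Tcrit_lt.
      replace (INR (2 * n + 2) * (b * (x - xs)) / INR (2 * n + 1))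
        with (INR (2 * n + 2) * a2 x * (x - xs) / (INR (2 * n + 1) * a1))
        by (unfold b; field; lra).
      exact Hbranch.
Qed.
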